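(* Let $z\in\mathcal F_\mathbb Z\setminus\{\Theta\}$, let $(q,r)$ be its lexicographically maximal FPF-visible inversion, and let $m$ be the largest even integer with $z(m)\ne m-1$. Then: - $q$ is the maximal FPF-visible descent of $z$; - $r$ is the maximal integer with $z(r)<\min\{q,z(q)\}$; - $z(q+1)<z(q+2)<\cdots<z(m)\le q$; - either $z(q)<q<r\le m$, or $q<z(q)=r+1=m$.
   Context: Let $S_\mathbb Z$ be the group of finitely supported permutations of $\mathbb Z$. Let $\Theta(i)=i-(-1)^i$ and $\mathcal F_\mathbb Z=\{w^{-1}\Theta w:w\in S_\mathbb Z\}$. A pair $(i,j)\in\mathbb Z\times\mathbb Z$ is an FPF-visible inversion of $z$ if $i<j$ and $z(j)<\min\{i,z(i)\}$. An integer $i$ is an FPF-visible descent of $z$ if $(i,i+1)$ is an FPF-visible inversion. Pairs are ordered lexicographically. *)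

From Stdlib Require Import ZArith Lia.
Open Scope Z_scope.

Definition Theta (i : Z) : Z := if Z.even i then i - 1 else i + 1.

Definition fin_supp_perm (w winv : Z -> Z) : Prop :=
  (forall i, winv (w i) = i) /\ (forall i, w (winv i) = i) /\
  (exists N : Z, forall i, N < Z.abs i -> w i = i).

Definition in_FZ (z : Z -> Z) : Prop :=
  exists w winv, fin_supp_perm w winv /\ forall i, z i = winv (Theta (w i)).

Definition fpf_vis_inv (z : Z -> Z) (i j : Z) : Prop :=
  i < j /\ z j < Z.min i (z i).

Definition fpf_vis_des (z : Z -> Z) (i : Z) : Prop := fpf_vis_inv z i (i + 1).

Definition lex_le (i j q r : Z) : Prop := i < q \/ (i = q /\ j <= r).

(* Every z in F_Z is a fixed-point-free involution; maximality of m makes it agree with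
   Theta beyond m, so z maps (m, oo) onto itself.  Lexicographic maximality of (q, r) forbids FPF-visible inversions
   (i, j) with q < i, which forces z to increase on (q, m] with values at most q.  The
   position of r and of z q is then read off from this monotone block. *)
From Stdlib Require Import ZArith Lia.
Open Scope Z_scope.

Lemma Theta_involutive (i : Z) : Theta (Theta i) = i.
Proof.
  unfold Theta; destruct (Z.even i) eqn:Ei.
  - rewrite Z.even_sub, Ei; simpl; lia.
  - rewrite Z.even_add, Ei; simpl; lia.
Qed.

Lemma Theta_neq (i : Z) : Theta i <> i.
Proof. unfold Theta; destruct (Z.even i); lia. Qed.

Lemma in_FZ_involutive (z : Z -> Z) : in_FZ z -> forall i, z (z i) = i.
Proof.
  intros [w [winv [[wK [winvK _]] Hz]]] i.
  now rewrite !Hz, winvK, Theta_involutive, wK.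
Qed.

Lemma in_FZ_neq (z : Z -> Z) : in_FZ z -> forall i, z i <> i.
Proof.
  intros [w [winv [[wK [winvK _]] Hz]]] i E.
  apply (Theta_neq (w i)).
  rewrite Hz in E; rewrite <- E at 2; now rewrite winvK.
Qed.

Section FixedPointFreeInvolution.

Variable z : Z -> Z.
Hypothesis z_involutive : forall i, z (z i) = i.
Hypothesis z_neq : forall i, z i <> i.

Lemma z_inj (i j : Z) : z i = z j -> i = j.
Proof. intros E; now rewrite <- (z_involutive i), E, z_involutive. Qed.

Variable m : Z.
Hypothesis m_max : forall k, Z.even k = true -> z k <> k - 1 -> k <= m.
Hypothesis m_even : Z.even m = true.

Lemma z_even_above (j : Z) : m < j -> Z.even j = true -> z j = j - 1.
Proof.
  intros Hj Ej; destruct (Z.eq_dec (z j) (j - 1)) as [E | N]; [easy |].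
  specialize (m_max j Ej N); lia.
Qed.

Lemma z_above (j : Z) : m < j -> z j = j - 1 \/ z j = j + 1.
Proof.
  intros Hj; destruct (Z.even j) eqn:Ej; [left; now apply z_even_above |].
  right.
  assert (E : z (j + 1) = j) by
    (rewrite z_even_above; [lia | lia | now rewrite Z.even_add, Ej]).
  rewrite <- E at 1; now rewrite z_involutive.
Qed.

Lemma z_gt_above (j : Z) : m < j -> m < z j.
Proof.
  intros Hj; destruct (z_above j Hj) as [E | E]; rewrite E; [| lia].
  enough (j <> m + 1) by lia; intros ->.
  assert (E2 : z (m + 2) = m + 1) by
    (rewrite z_even_above; [lia | lia | now rewrite Z.even_add, m_even]).
  pose proof (z_involutive (m + 2)) as I; rewrite E2 in I; lia.
Qed.

Lemma z_le_of_le (j : Z) : z j <= m -> j <= m.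
Proof.
  intros Hj; destruct (Z_le_gt_dec j m); [easy |].
  pose proof (z_gt_above j ltac:(lia)); lia.
Qed.

Hypothesis z_m_neq : z m <> m - 1.

Lemma z_m_lt : z m < m - 1.
Proof.
  pose proof (z_neq m).
  enough (~ m < z m) by lia; intros G.
  pose proof (z_gt_above (z m) G) as G'; rewrite z_involutive in G'; lia.
Qed.

Variables q r : Z.
Hypothesis qr_inv : fpf_vis_inv z q r.
Hypothesis qr_max : forall i j, fpf_vis_inv z i j -> lex_le i j q r.

Lemma no_vis_inv_right (i j : Z) : q < i -> i < j -> Z.min i (z i) <= z j.
Proof.
  intros Hi Hij; destruct (Z_lt_ge_dec (z j) (Z.min i (z i))) as [L |]; [| lia].
  destruct (qr_max i j (conj Hij L)); lia.
Qed.

Lemma z_lt_right (i j : Z) : q < i -> i < j -> z j < i -> z i < z j.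
Proof.
  intros Hi Hij Hj; pose proof (no_vis_inv_right i j Hi Hij).
  assert (z i <> z j) by (intros E; apply z_inj in E; lia).
  lia.
Qed.

Lemma r_le_m : r <= m.
Proof.
  destruct qr_inv; destruct (Z_le_gt_dec r m); [easy |].
  destruct (z_above r ltac:(lia)); lia.
Qed.

Lemma vis_des_le_q (i : Z) : fpf_vis_des z i -> i <= q.
Proof. intros Hi; destruct (qr_max i (i + 1) Hi); lia. Qed.

Lemma lt_min_q_le_r (j : Z) : z j < Z.min q (z q) -> j <= r.
Proof.
  intros Hj; destruct (Z_le_gt_dec j q); [destruct qr_inv; lia |].
  destruct (qr_max q j ltac:(split; lia)); lia.
Qed.

Lemma z_m_le_q : z m <= q.
Proof.
  pose proof z_m_lt.
  destruct (Z_le_gt_dec (z m) q) as [| G]; [easy | exfalso].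
  pose proof (no_vis_inv_right (m - 1) m ltac:(lia) ltac:(lia)).
  assert (z (m - 1) <> z m) by (intros E; apply z_inj in E; lia).
  pose proof (no_vis_inv_right (z m) (m - 1) ltac:(lia) ltac:(lia)) as N.
  rewrite z_involutive in N; lia.
Qed.

Lemma z_le_q_block (j : Z) : q < j <= m -> z j <= q.
Proof.
  intros Hj; pose proof z_m_le_q.
  destruct (Z.eq_dec j m) as [-> |]; [easy |].
  pose proof (z_lt_right j m ltac:(lia) ltac:(lia) ltac:(lia)); lia.
Qed.

Lemma z_increasing_block (i j : Z) : q < i -> i < j <= m -> z i < z j.
Proof.
  intros Hi Hj; apply z_lt_right; try lia.
  pose proof (z_le_q_block j ltac:(lia)); lia.
Qed.

Lemma q_vis_des : fpf_vis_des z q.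
Proof.
  destruct qr_inv as [Hqr Hzr]; pose proof r_le_m; split; [lia |].
  destruct (Z.eq_dec r (q + 1)) as [<- |]; [easy |].
  pose proof (z_increasing_block (q + 1) r ltac:(lia) ltac:(lia)); lia.
Qed.

Lemma z_q_cases :
  (z q < q /\ q < r /\ r <= m) \/ (q < z q /\ z q = r + 1 /\ r + 1 = m).
Proof.
  destruct qr_inv as [Hqr Hzr]; pose proof r_le_m.
  destruct (Z_lt_ge_dec (z q) q); [left; lia | right].
  assert (Hq : q < z q) by (pose proof (z_neq q); lia).
  assert (z q <= m) by (apply z_le_of_le; rewrite z_involutive; lia).
  assert (Hzq : z q = m).
  { destruct (Z.eq_dec (z q) m); [easy |].
    pose proof (z_increasing_block (z q) m Hq ltac:(lia)) as I.
    rewrite z_involutive in I; pose proof z_m_le_q; lia. }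
  assert (Hzm : z m = q) by now rewrite <- Hzq, z_involutive.
  assert (r <> m) by (intros ->; lia).
  assert (z (m - 1) < q) by
    (rewrite <- Hzm; apply z_increasing_block; lia).
  destruct (qr_max q (m - 1) ltac:(split; lia)); lia.
Qed.

End FixedPointFreeInvolution.

Theorem lemma3p15 (z : Z -> Z) (q r m : Z) :
  in_FZ z ->
  ~ (forall i, z i = Theta i) ->
  fpf_vis_inv z q r ->
  (forall i j, fpf_vis_inv z i j -> lex_le i j q r) ->
  Z.even m = true -> z m <> m - 1 ->
  (forall k, Z.even k = true -> z k <> k - 1 -> k <= m) ->
  (fpf_vis_des z q /\ (forall i, fpf_vis_des z i -> i <= q)) /\
  (z r < Z.min q (z q) /\ (forall j, z j < Z.min q (z q) -> j <= r)) /\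
  ((forall i, q + 1 <= i < m -> z i < z (i + 1)) /\ z m <= q) /\
  ((z q < q /\ q < r /\ r <= m) \/ (q < z q /\ z q = r + 1 /\ r + 1 = m)).
Proof.
  intros HF _ Hqr Hmax Em Hm Hmmax.
  pose proof (in_FZ_involutive z HF) as Hinv.
  pose proof (in_FZ_neq z HF) as Hneq.
  split; [split | split; [split | split; [split |]]];
    eauto using q_vis_des, vis_des_le_q, lt_min_q_le_r, z_m_le_q, z_q_cases.
  - now destruct Hqr.
  - intros i Hi; eapply z_increasing_block; eauto; lia.
Qed.
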